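(* Let $G=(V,E)$ be a finite $k$-regular graph with $\widetilde\lambda_2=\widetilde\lambda_2(G)<\frac12$, and suppose $|V|$ is sufficiently large, i.e. $|V|\ge N$ for a threshold $N$ depending only on $\widetilde\lambda_2$. Then for every subset $\emptyset\ne S\subsetneq V$, $|E(S,\bar S)|\ge k$.
   Context: $\widetilde\lambda_2(G)$ is the second largest eigenvalue of the adjacency matrix of $G$ divided by $k$. $E(S,\bar S)$ is the set of edges with one endpoint in $S$ and the other in $V\setminus S$. *)

From mathcomp Require Import all_boot all_order all_algebra.
From mathcomp Require Import reals.
Set Implicit Arguments. Unset Strict Implicit. Unset Printing Implicit Defensive.
Import Order.TTheory GRing.Theory Num.Theory.
Local Open Scope ring_scope.

Definition simple_graph (n : nat) (e : rel 'I_n) : Prop :=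
  (forall x y, e x y = e y x) /\ (forall x, ~~ e x x).

Definition regular (n : nat) (e : rel 'I_n) (k : nat) : Prop :=
  forall x, #|[set y | e x y]| = k.

Definition adjmx (R : nzRingType) (n : nat) (e : rel 'I_n) : 'M[R]_n :=
  \matrix_(i, j) (e i j)%:R.

(* The eigenvalues
   with multiplicity are the roots of the characteristic polynomial, listed in
   nonincreasing order as s; the second largest is s`_1. *)
Definition normalized_lambda2 (R : realType) (n : nat) (e : rel 'I_n) (k : nat)
    (l : R) : Prop :=
  exists s : seq R,
    [/\ sorted (fun a b => b <= a) s,
        char_poly (adjmx R e) = \prod_(x <- s) ('X - x%:P)
      & l = s`_1 / k%:R].

(* E(S, S^c): edges with one endpoint in S and the other outside S;
   each such edge is counted once, oriented from S to its complement. *)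
Definition cut_size (n : nat) (e : rel 'I_n) (S : {set 'I_n}) : nat :=
  #|[set p : 'I_n * 'I_n | [&& p.1 \in S, p.2 \notin S & e p.1 p.2]]|.

From mathcomp Require Import all_boot all_order all_algebra.
From mathcomp Require Import reals.
From mathcomp Require Import zify ring.
From mathcomp.real_closed Require Import complex.
Set Implicit Arguments. Unset Strict Implicit. Unset Printing Implicit Defensive.
Import Order.TTheory GRing.Theory Num.Theory.

(* Suppose fewer than k edges leave S.  If one side has 1 <= t <= k vertices,
   each of them has at least k - t + 1 neighbours outside, so at least
   t (k - t + 1) >= k edges leave it: impossible.  Otherwise both sides have
   more than k vertices, and on the plane spanned by the indicator vectors of
   S and its complement the form of A - (k/2) I is
   |a|^2 (k|S|/2 - c) + 2 Re(a conj(b)) c + |b|^2 (k|~S|/2 - c) with c < k,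
   which is positive semidefinite.  But lambda_2 < k/2 leaves at most one
   eigenvalue of A above k/2, and the plane contains a nonzero vector
   orthogonal to its eigenvector, on which the form is negative.  No bound
   on |V| is needed. *)

Section EdgeCount.
Variables (n : nat) (e : rel 'I_n).

Definition edge_count (T U : {set 'I_n}) : nat :=
  \sum_(i in T) \sum_(j in U) (e i j : nat).

Lemma sum_adj_card i : \sum_j (e i j : nat) = #|[set j | e i j]|.
Proof.
rewrite -sum1_card [RHS]big_mkcond.
by apply: eq_bigr => j _; rewrite inE; case: (e i j).
Qed.

Lemma cut_size_edge_count S : cut_size e S = edge_count S (~: S).
Proof.
rewrite /cut_size /edge_count pair_big -sum1_card big_mkcond [RHS]big_mkcond /=.
apply: eq_bigr => -[i j] _; rewrite !inE.
by case: (i \in S); case: (j \in S); case: (e i j).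
Qed.

Lemma edge_count_sym T U : (forall x y, e x y = e y x) ->
  edge_count T U = edge_count U T.
Proof.
move=> sym; rewrite /edge_count exchange_big /=.
by apply: eq_bigr => j _; apply: eq_bigr => i _; rewrite sym.
Qed.

Lemma cut_size_setC S : (forall x y, e x y = e y x) ->
  cut_size e (~: S) = cut_size e S.
Proof. by move=> sym; rewrite !cut_size_edge_count setCK edge_count_sym. Qed.

Lemma edge_count_setC k T U : regular e k ->
  edge_count T U + edge_count T (~: U) = k * #|T|.
Proof.
move=> reg; rewrite /edge_count -big_split /= -sum1_card big_distrr /=.
apply: eq_bigr => i _.
rewrite muln1 -(reg i) -sum_adj_card (bigID (mem U) xpredT) /=.
by congr (_ + _); apply: eq_bigl => j; rewrite inE.
Qed.

Lemma edge_count_diag_le T : (forall x, ~~ e x x) ->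
  edge_count T T <= #|T| * #|T|.-1.
Proof.
move=> irr; rewrite /edge_count -sum_nat_const.
apply: leq_sum => i iT; rewrite (bigD1 i) //= (negbTE (irr i)) add0n.
rewrite (cardsD1 i T) iT add1n /= -sum1_card.
apply: (@leq_trans (\sum_(j in T | j != i) 1)).
  by apply: leq_sum => j _; case: (e i j).
by apply/eq_leq/eq_bigl => j; rewrite !inE andbC.
Qed.

Lemma cut_size_small_side k (S : {set 'I_n}) :
  (forall x, ~~ e x x) -> regular e k -> 0 < #|S| -> #|S| <= k ->
  k <= cut_size e S.
Proof.
move=> irr reg S_gt0 S_le_k; rewrite cut_size_edge_count.
have := edge_count_setC S S reg; have := edge_count_diag_le S irr.
case: #|S| S_gt0 S_le_k => // t _ t_lt_k /=.
have := leq_mul (leqnn t) t_lt_k; nia.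
Qed.

End EdgeCount.

Lemma four_mul_le c k s : c < k -> k < s -> 4 * c <= k * s.
Proof. by move=> c_lt k_lt; have := leq_mul (leqnn k) k_lt; nia. Qed.

Local Open Scope ring_scope.
Local Open Scope sesquilinear_scope.

Lemma char_poly_conjmx (F : fieldType) n (P D : 'M[F]_n) : P \in unitmx ->
  char_poly (invmx P *m D *m P) = char_poly D.
Proof.
move=> Pu; rewrite /char_poly /char_poly_mx.
set Pc := map_mx polyC P; set Qc := map_mx polyC (invmx P).
have QP : Qc *m Pc = 1%:M by rewrite -map_mxM mulVmx // map_mx1.
have PQ : Pc *m Qc = 1%:M by rewrite -map_mxM mulmxV // map_mx1.
have XE : ('X%:M : 'M[{poly F}]_n) = Qc *m 'X%:M *m Pc.
  by rewrite scalar_mxC -mulmxA QP mulmx1.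
rewrite [in LHS]XE !map_mxM -/Qc -/Pc -mulmxBl -mulmxBr !det_mulmx mulrC mulrA.
by rewrite -det_mulmx PQ det1 mul1r.
Qed.

Lemma exists_comb_vanishing (F : fieldType) n (x y : 'rV[F]_n) (B : {set 'I_n}) :
  (#|B| <= 1)%N ->
  exists a b : F,
    ((a != 0) || (b != 0)) /\ {in B, forall j, (a *: x + b *: y) 0 j = 0}.
Proof.
move=> B_le1; have [B0|[j0 j0B]] := set_0Vmem B.
  by exists 1, 0; rewrite oner_eq0; split=> // j; rewrite B0 inE.
have B1 : B = [set j0] by apply/eqP; rewrite eq_sym eqEcard sub1set j0B cards1.
have [x0|x_neq0] := eqVneq (x 0 j0) 0.
  exists 1, 0; rewrite oner_eq0; split=> // j; rewrite B1 inE => /eqP->.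
  by rewrite !mxE x0 mulr0 mul0r addr0.
exists (y 0 j0), (- x 0 j0); rewrite oppr_eq0 x_neq0 orbT; split=> // j.
by rewrite B1 inE => /eqP->; rewrite !mxE mulNr mulrC subrr.
Qed.

Definition quad_form (C : numClosedFieldType) n (M : 'M[C]_n) (w : 'rV[C]_n) : C :=
  (w *m M *m w^t*) 0 0.

Section HermitianSpectrum.
Variables (C : numClosedFieldType) (n : nat) (A : 'M[C]_n).
Hypothesis A_herm : A \is hermsymmx.
Let P := spectralmx A.
Let d := spectral_diag A.

Lemma mulmx_trC_spectral : P^t* *m P = 1%:M.
Proof. by rewrite -invmx_unitary ?spectral_unitarymx // mulVmx // spectral_unit. Qed.

Lemma hermitian_spectralE : A = P^t* *m diag_mx d *m P.
Proof.
rewrite -invmx_unitary ?spectral_unitarymx //.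
exact/orthomx_spectralP/hermitian_normalmx.
Qed.

Lemma char_poly_hermitian : char_poly A = \prod_j ('X - (d 0 j)%:P).
Proof.
rewrite {1}hermitian_spectralE -invmx_unitary ?spectral_unitarymx //.
rewrite char_poly_conjmx ?spectral_unit // char_poly_trig ?diag_mx_is_trig //.
by apply: eq_bigr => j _; rewrite mxE eqxx mulr1n.
Qed.

Lemma hermitian_form (mu : C) (w : 'rV_n) : let z := w *m P^t* in
  quad_form (A - mu%:M) w = \sum_j (d 0 j - mu) * (z 0 j * (z 0 j)^*).
Proof.
move=> z; have -> : A - mu%:M = P^t* *m diag_mx (d - const_mx mu) *m P.
  rewrite {1}hermitian_spectralE linearB /= diag_const_mx mulmxBr mulmxBl.
  by congr (_ - _); rewrite scalar_mxC -mulmxA mulmx_trC_spectral mulmx1.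
have zC : P *m w^t* = z^t* by rewrite /z trmx_mul map_mxM trmxCK.
rewrite /quad_form !mulmxA -(mulmxA _ P) zC -/z mul_mx_diag !mxE.
by apply: eq_bigr => j _; rewrite !mxE; ring.
Qed.

Lemma hermitian_form_lt0 (mu : C) (w : 'rV_n) : w != 0 ->
  (forall j, ~~ (d 0 j < mu) -> (w *m P^t*) 0 j = 0) ->
  quad_form (A - mu%:M) w < 0.
Proof.
move=> w_neq0 z_bad; rewrite hermitian_form; set z := w *m P^t* in z_bad *.
have z_neq0 : z != 0.
  apply: contraNneq w_neq0 => z0.
  by rewrite -[w]mulmx1 -mulmx_trC_spectral mulmxA -/z z0 mul0mx.
have [j0 zj0] : exists j0, z 0 j0 != 0.
  apply/existsP; apply: contraNT z_neq0; rewrite negb_exists => /forallP z0.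
  by apply/eqP/rowP => j; rewrite [RHS]mxE; apply/eqP/negPn/z0.
have term_le0 j : (d 0 j - mu) * (z 0 j * (z 0 j)^*) <= 0.
  have [dj_lt|dj_ge] := boolP (d 0 j < mu); last by rewrite z_bad // mul0r mulr0.
  by rewrite nmulr_rle0 ?subr_lt0 // mul_conjC_ge0.
rewrite (bigD1 j0) //= -[X in _ < X](addr0 0) ltr_leD ?sumr_le0 //.
have dj0_lt : d 0 j0 < mu by apply: contraNT zj0 => /z_bad ->.
by rewrite nmulr_rlt0 ?subr_lt0 // mul_conjC_gt0.
Qed.

Lemma hermitian_psd_plane_count (s : seq C) (mu : C) (u v : 'rV_n) :
  char_poly A = \prod_(x <- s) ('X - x%:P) ->
  (forall a b : C, a *: u + b *: v = 0 -> a = 0 /\ b = 0) ->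
  (forall a b : C, 0 <= quad_form (A - mu%:M) (a *: u + b *: v)) ->
  (1 < count (fun x => ~~ (x < mu)%R) s)%N.
Proof.
(* With at most one eigenvalue >= mu, some nonzero w in the plane has no
   component along its eigenvector, and then the form is negative at w. *)
move=> charA uv_free psd; rewrite ltnNge; apply/negP => count_le1.
set B := [set j | ~~ (d 0 j < mu)].
have B_le1 : (#|B| <= 1)%N.
  rewrite char_poly_hermitian -(big_map (d 0) xpredT (fun x => 'X - x%:P)) in charA.
  rewrite -(permP (prod_XsubC_eq charA)) count_map -sum1_count in count_le1.
  rewrite -sum1_card; apply: leq_trans count_le1; apply/eq_leq/eq_bigl => j.
  by rewrite inE.
have [a [b [ab_neq0 ab_B]]] :=
  exists_comb_vanishing (u *m P^t*) (v *m P^t*) B_le1.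
set w := a *: u + b *: v.
have w_neq0 : w != 0.
  by apply: contraTneq ab_neq0 => /uv_free[-> ->]; rewrite eqxx.
suff /lt_geF : quad_form (A - mu%:M) w < 0 by rewrite psd.
apply: hermitian_form_lt0 => // j dj.
by rewrite mulmxDl -!scalemxAl ab_B // inE.
Qed.
End HermitianSpectrum.

Lemma hermitian_form2_ge0 (C : numClosedFieldType) (al be ga a b : C) :
  0 <= al -> 0 <= ga -> be \is Num.real -> be ^+ 2 <= al * ga ->
  0 <= a * a^* * al + (a * b^* + a^* * b) * be + b * b^* * ga.
Proof.
move=> al_ge0 ga_ge0 be_real be2_le.
have al_real : al \is Num.real by apply: ger0_real.
have be2_ge0 : 0 <= be ^+ 2 by rewrite expr2 -{2}(conj_Creal be_real) mul_conjC_ge0.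
have [al0 | al_neq0] := eqVneq al 0.
  rewrite al0 mul0r in be2_le *.
  have /eqP : be ^+ 2 = 0 by apply/le_anti; rewrite be2_le.
  rewrite sqrf_eq0 => /eqP ->; rewrite !mulr0 !add0r.
  by rewrite mulr_ge0 // mul_conjC_ge0.
have al_gt0 : 0 < al by rewrite lt_def al_neq0.
rewrite -(pmulr_rge0 _ al_gt0).
(* complete the square: al * form = |a al + b be|^2 + |b|^2 (al ga - be^2) *)
set w := a * al + b * be.
have wwC : w * w^*
    = a * a^* * al ^+ 2 + (a * b^* + a^* * b) * al * be + b * b^* * be ^+ 2.
  by rewrite /w rmorphD !rmorphM /= (conj_Creal al_real) (conj_Creal be_real); ring.
have -> : al * (a * a^* * al + (a * b^* + a^* * b) * be + b * b^* * ga)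
    = w * w^* + b * b^* * (al * ga - be ^+ 2) by rewrite wwC; ring.
by rewrite addr_ge0 ?mul_conjC_ge0 // mulr_ge0 ?mul_conjC_ge0 ?subr_ge0.
Qed.

Lemma quad_form_comb2 (C : numClosedFieldType) n (M : 'M[C]_n)
    (u v : 'rV[C]_n) (a b : C) :
  u^t* = u^T -> v^t* = v^T ->
  quad_form M (a *: u + b *: v)
  = a * a^* * (u *m M *m u^T) 0 0 + a * b^* * (u *m M *m v^T) 0 0
    + b * a^* * (v *m M *m u^T) 0 0 + b * b^* * (v *m M *m v^T) 0 0.
Proof.
move=> uC vC; rewrite /quad_form.
have -> : (a *: u + b *: v)^t* = a^* *: u^T + b^* *: v^T.
  by rewrite linearD !linearZ /= map_mxD !map_mxZ uC vC.
rewrite mulmxDr !mulmxDl -!scalemxAl -!scalemxAr !mxE; ring.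
Qed.

Definition indicator_row (R : nzRingType) n (T : {set 'I_n}) : 'rV[R]_n :=
  \row_i (i \in T)%:R.

Lemma indicator_row_trC (C : numClosedFieldType) n (T : {set 'I_n}) :
  (indicator_row C T)^t* = (indicator_row C T)^T.
Proof. by apply/matrixP => i j; rewrite !mxE conjC_nat. Qed.

Lemma indicator_row_setC_free (R : nzRingType) n (S : {set 'I_n}) :
  S != set0 -> S != setT -> forall a b : R,
  a *: indicator_row R S + b *: indicator_row R (~: S) = 0 -> a = 0 /\ b = 0.
Proof.
move=> /set0Pn[x xS]; rewrite -properT => /properP[_ [y _ yS]] a b /rowP ab0.
have := ab0 x; have := ab0 y; rewrite !mxE !inE xS (negbTE yS) /=.
by rewrite !mulr1 !mulr0 addr0 add0r => -> ->.
Qed.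

Lemma indicator_form (R : comNzRingType) n (M : 'M[R]_n) (T U : {set 'I_n}) :
  (indicator_row R T *m M *m (indicator_row R U)^T) 0 0
  = \sum_(i in T) \sum_(j in U) M i j.
Proof.
rewrite exchange_big mxE [RHS]big_mkcond /=; apply: eq_bigr => j _.
rewrite !mxE mulr_suml [in RHS]big_mkcond /=.
case: (j \in U); last by rewrite big1 // => i _; rewrite mulr0.
by apply: eq_bigr => i _; rewrite !mxE mulr1; case: (i \in T); rewrite ?mul1r ?mul0r.
Qed.

Lemma sum_scalar_mx_row (R : nzRingType) n (mu : R) (U : {set 'I_n}) i :
  \sum_(j in U) (mu%:M : 'M[R]_n) i j = if i \in U then mu else 0.
Proof.
case: ifPn => iU.
  rewrite (bigD1 i) //= mxE eqxx mulr1n big1 ?addr0 // => j /andP[_ ji].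
  by rewrite mxE eq_sym (negbTE ji).
by apply: big1 => j jU; rewrite mxE; case: eqP => // ij; rewrite ij jU in iU.
Qed.

Lemma adjmx_indicator_form (R : comNzRingType) n (e : rel 'I_n) (mu : R) T U :
  (indicator_row R T *m (adjmx R e - mu%:M) *m (indicator_row R U)^T) 0 0
  = (edge_count e T U)%:R - mu *+ #|T :&: U|.
Proof.
have -> : mu *+ #|T :&: U| = \sum_(i in T) \sum_(j in U) (mu%:M : 'M[R]_n) i j.
  under eq_bigr do rewrite sum_scalar_mx_row.
  by rewrite -big_mkcondr -sumr_const; apply: eq_bigl => i; rewrite inE.
rewrite indicator_form natr_sum -sumrB; apply: eq_bigr => i _.
by rewrite natr_sum -sumrB; apply: eq_bigr => j _; rewrite !mxE.
Qed.

Lemma adjmx_hermitian (C : numClosedFieldType) n (e : rel 'I_n) :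
  (forall x y, e x y = e y x) -> adjmx C e \is hermsymmx.
Proof.
move=> sym; apply/is_hermitianmxP; rewrite expr0 scale1r.
by apply/matrixP => i j; rewrite !mxE conjC_nat sym.
Qed.

Lemma map_adjmx (R S : nzRingType) (f : {rmorphism R -> S}) n (e : rel 'I_n) :
  map_mx f (adjmx R e) = adjmx S e.
Proof. by apply/matrixP => i j; rewrite !mxE rmorph_nat. Qed.

Lemma le_half_sub (F : numFieldType) (c m : nat) : (4 * c <= m)%N ->
  c%:R <= m%:R / 2 - c%:R :> F.
Proof.
move=> c_le; rewrite -subr_ge0.
have -> : m%:R / 2 - c%:R - c%:R = (m - 4 * c)%:R / 2 :> F.
  by rewrite natrB // natrM; field.
by rewrite divr_ge0 ?ler0n.
Qed.

Lemma indicator_plane_psd (C : numClosedFieldType) n (e : rel 'I_n) k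
    (S : {set 'I_n}) (a b : C) :
  simple_graph e -> regular e k ->
  (cut_size e S < k)%N -> (k < #|S|)%N -> (k < #|~: S|)%N ->
  0 <= quad_form (adjmx C e - (k%:R / 2)%:M)
                 (a *: indicator_row C S + b *: indicator_row C (~: S)).
Proof.
move=> [sym _] reg cut_lt S_gt T_gt; set c := cut_size e S in cut_lt.
have NST : edge_count e S (~: S) = c by rewrite /c cut_size_edge_count.
have NTS : edge_count e (~: S) S = c by rewrite edge_count_sym.
have NSS : (edge_count e S S)%:R = (k * #|S|)%:R - c%:R :> C.
  by rewrite -(edge_count_setC S S reg) NST natrD addrK.
have NTT : (edge_count e (~: S) (~: S))%:R = (k * #|~: S|)%:R - c%:R :> C.
  by rewrite -(edge_count_setC (~: S) (~: S) reg) setCK NTS natrD addrK.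
rewrite quad_form_comb2 ?indicator_row_trC // !adjmx_indicator_form.
rewrite !setIid setICr (setIC (~: S)) setICr cards0 !mulr0n !subr0.
rewrite NSS NTT NST NTS.
pose al : C := (k * #|S|)%:R / 2 - c%:R.
pose ga : C := (k * #|~: S|)%:R / 2 - c%:R.
have -> : a * a^* * ((k * #|S|)%:R - c%:R - k%:R / 2 *+ #|S|) + a * b^* * c%:R
    + b * a^* * c%:R + b * b^* * ((k * #|~: S|)%:R - c%:R - k%:R / 2 *+ #|~: S|)
    = a * a^* * al + (a * b^* + a^* * b) * c%:R + b * b^* * ga.
  by rewrite /al /ga !natrM; field.
have c_le_al : c%:R <= al by apply/le_half_sub/four_mul_le.
have c_le_ga : c%:R <= ga by apply/le_half_sub/four_mul_le.
apply: hermitian_form2_ge0; rewrite ?realn //.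
- exact: le_trans (ler0n _ _) c_le_al.
- exact: le_trans (ler0n _ _) c_le_ga.
- by rewrite expr2 ler_pM ?ler0n.
Qed.

Lemma count_sorted_ge_le1 (R : realDomainType) (s : seq R) (m : R) :
  sorted (fun a b => b <= a) s -> s`_1 < m ->
  (count (fun x => ~~ (x < m)%R) s <= 1)%N.
Proof.
case: s => [|x [|y s]] //=; first by rewrite addn0 leq_b1.
move=> /andP[_ path_y] y_lt.
have /allP s_le_y := order_path_min (rev_trans le_trans) path_y.
rewrite y_lt (eq_in_count (a2 := pred0)) ?count_pred0 ?addn0 ?leq_b1 //.
by move=> z /s_le_y z_le; rewrite /= (le_lt_trans z_le y_lt).
Qed.

Theorem lemma3p5 (R : realType) (l : R) (hl : l < 2^-1) :
  exists N : nat, forall (n : nat) (e : rel 'I_n) (k : nat),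
    simple_graph e -> regular e k -> normalized_lambda2 e k l ->
    (N <= n)%N ->
    forall S : {set 'I_n}, S != set0 -> S != setT ->
      (k <= cut_size e S)%N.
Proof.
exists 0%N => n e k simple_e reg [s [s_sorted charA l_def]] _ S S_neq0 S_neqT.
have [sym irr] := simple_e; rewrite leqNgt; apply/negP => cut_lt.
have S_gt0 : (0 < #|S|)%N by rewrite card_gt0.
have T_gt0 : (0 < #|~: S|)%N.
  by rewrite card_gt0; apply: contraNneq S_neqT => T0; rewrite -[S]setCK T0 setC0.
have [S_le|S_gt] := leqP #|S| k.
  by move: cut_lt; rewrite ltnNge (cut_size_small_side irr reg S_gt0 S_le).
have [T_le|T_gt] := leqP #|~: S| k.
  move: cut_lt; rewrite ltnNge -(cut_size_setC S sym).
  by rewrite (cut_size_small_side irr reg T_gt0 T_le).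
have k_gt0 : (0 < k)%N := leq_ltn_trans (leq0n _) cut_lt.
have s1_lt : s`_1 < k%:R / 2.
  by move: hl; rewrite l_def ltr_pdivrMr ?ltr0n // mulrC.
have mu_C : real_complex R (k%:R / 2) = k%:R / 2 :> R[i].
  by rewrite rmorphM fmorphV /= !rmorph_nat.
have := count_sorted_ge_le1 s_sorted s1_lt; apply/negP; rewrite -ltnNge.
under eq_count do rewrite -ltcR mu_C.
rewrite -(count_map (real_complex R) (fun x => ~~ (x < k%:R / 2))).
apply: (hermitian_psd_plane_count (adjmx_hermitian _ sym)).
- rewrite -(map_adjmx (real_complex R)) -map_char_poly charA.
  by rewrite map_prod_XsubC big_map.
- exact: (indicator_row_setC_free S_neq0 S_neqT).
- by move=> a b; apply: indicator_plane_psd.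
Qed.
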